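(* Let $\Omega$ be a triangulation whose edges are labeled as terminal-, internal- and frontier-edges. Let $P$ be the (non-simple) polygon bounding a terminal-edge region $R$ of $\Omega$, and let $B$ be the set of barrier-edge tips of $P$. Compute $\deg(b_i)$ for every $b_i\in B$ by visiting the triangles of $R$ incident to $b_i$. Over all these computations together, each triangle of $R$ is visited at most $3$ times.
   Context: Let $\Omega$ be a triangulation in which every triangle has a designated unique longest edge. Edges are labeled as follows. An edge shared by two triangles is: - a terminal-edge if it is the longest edge of both triangles; - a frontier-edge if it is the longest edge of neither triangle; - an internal-edge otherwise. Edges belonging to a single triangle are boundary edges and are treated as frontier-edges. For a triangle $t_0$, $\mathrm{Lepp}(t_0)$ is the sequence $t_0,t_1,\dots$ in which each $t_i$ is the neighbor of $t_{i-1}$ across the longest edge of $t_{i-1}$, ending at a terminal (or boundary) edge. A terminal-edge region $R$ is the union of all triangles whose Lepp ends at the same terminal-edge. Its boundary polygon $P$ consists of the frontier-edges surrounding it. A barrier-edge is a frontier-edge both of whose adjacent triangles lie in $R$. A barrier-edge tip of $R$ is an endpoint of a barrier-edge that is shared by no other barrier-edge or frontier-edge. For a barrier-edge tip $b$, $\deg(b)$ is the number of internal-edges of $R$ incident to $b$. It is computed by visiting, one at a time, the triangles of $R$ having $b$ as a vertex; a triangle is visited once in the computation of $\deg(b)$ if it has $b$ as a vertex, and not at all otherwise. *)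

From mathcomp Require Import all_boot all_order all_algebra.
Set Implicit Arguments. Unset Strict Implicit. Unset Printing Implicit Defensive.
Import Order.TTheory GRing.Theory Num.Theory.

(* A triangulation is modelled combinatorially: vertices form a finType V,
   triangles are 3-element vertex sets (a set Tr : {set {set V}}),
   edges are 2-element vertex sets.  lg t is the designated longest edge of t. *)

Section Defs.
Variable V : finType.

Definition edges_of (t : {set V}) : {set {set V}} :=
  [set e in powerset t | #|e| == 2].

Definition tris_of (Tr : {set {set V}}) (e : {set V}) : {set {set V}} :=
  [set t in Tr | e \subset t].

Definition is_edge (Tr : {set {set V}}) (e : {set V}) : bool :=
  [exists t in Tr, e \in edges_of t].

(* frontier-edge: longest edge of none of its (one or two) triangles;
   boundary edges (one triangle) whose triangle's longest edge is not e fall here.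
   Boundary edges are treated as frontier-edges. *)
Definition frontier_edge (Tr : {set {set V}}) (lg : {set V} -> {set V}) e : bool :=
  is_edge Tr e &&
  ((#|tris_of Tr e| == 1) || [forall t in tris_of Tr e, lg t != e]).

Definition terminal_edge (Tr : {set {set V}}) (lg : {set V} -> {set V}) e : bool :=
  is_edge Tr e && (#|tris_of Tr e| == 2) && [forall t in tris_of Tr e, lg t == e].

Definition internal_edge (Tr : {set {set V}}) (lg : {set V} -> {set V}) (e : {set V}) : bool :=
  is_edge Tr e && ~~ frontier_edge Tr lg e && ~~ terminal_edge Tr lg e.

Definition lepp_step (Tr : {set {set V}}) (lg : {set V} -> {set V}) : rel {set V} :=
  fun t t' => [&& t \in Tr, t' \in Tr, t' != t & lg t \subset t'].

(* terminal-edge region of the terminal edge e: triangles whose Lepp reaches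
   (hence ends at) the terminal edge e *)
Definition te_region (Tr : {set {set V}}) (lg : {set V} -> {set V}) (e : {set V}) : {set {set V}} :=
  [set t in Tr | [exists t', connect (lepp_step Tr lg) t t' && (lg t' == e)]].

Definition poly_edges (Tr : {set {set V}}) (lg : {set V} -> {set V}) (Rg : {set {set V}}) : {set {set V}} :=
  [set e | frontier_edge Tr lg e && [exists t in Rg, e \subset t]].

Definition barrier_edge (Tr : {set {set V}}) (lg : {set V} -> {set V}) (Rg : {set {set V}}) (e : {set V}) : bool :=
  frontier_edge Tr lg e && (#|tris_of Tr e| == 2) && (tris_of Tr e \subset Rg).

Definition barrier_tips (Tr : {set {set V}}) (lg : {set V} -> {set V}) (Rg : {set {set V}}) : {set V} :=
  [set b | [exists e, barrier_edge Tr lg Rg e && (b \in e) &&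
             [forall e', (e' != e) ==> (e' \in poly_edges Tr lg Rg) ==> (b \notin e')]]].

Definition deg (Tr : {set {set V}}) (lg : {set V} -> {set V}) (Rg : {set {set V}}) (b : V) : nat :=
  #|[set e | internal_edge Tr lg e && (b \in e) && [exists t in Rg, e \subset t]]|.

Definition visits_in_deg (Rg : {set {set V}}) (b : V) (t : {set V}) : nat :=
  (t \in Rg) && (b \in t).

Definition total_visits (Rg : {set {set V}}) (B : {set V}) (t : {set V}) : nat :=
  \sum_(b in B) visits_in_deg Rg b t.

End Defs.

Definition triangulation_with_lg (V : finType) (R : realFieldType)
  (Tr : {set {set V}}) (lg : {set V} -> {set V}) (len : {set V} -> R) : Prop :=
  [/\ forall t, t \in Tr -> #|t| = 3,
      forall e : {set V}, #|e| = 2 -> (#|tris_of Tr e| <= 2)%N,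
      forall t, t \in Tr -> lg t \in edges_of t
    & forall t e : {set V}, t \in Tr -> e \in edges_of t -> e != lg t ->
        (len e < len (lg t))%R].

From mathcomp Require Import all_boot all_order all_algebra.

(* A triangle is visited once for each of its vertices that is a barrier-edge
   tip, and a triangle has only three vertices. *)

Lemma total_visitsE {V : finType} (Rg : {set {set V}}) (B t : {set V}) :
  total_visits Rg B t = ((t \in Rg) * #|B :&: t|)%N.
Proof.
rewrite /total_visits /visits_in_deg; have [tRg | _] /= := boolP (t \in Rg).
  by rewrite mul1n -big_mkcondr sum1_card; apply: eq_card => b; rewrite !inE.
by rewrite mul0n big1.
Qed.

Lemma total_visits_le_card {V : finType} (Rg : {set {set V}}) (B t : {set V}) :
  (total_visits Rg B t <= #|t|)%N.
Proof.
rewrite total_visitsE; apply: leq_trans (subset_leq_card (subsetIr B t)).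
by case: (t \in Rg); rewrite ?mul1n.
Qed.

Lemma te_region_sub {V : finType} (Tr : {set {set V}}) lg (e : {set V}) :
  te_region Tr lg e \subset Tr.
Proof. by apply/subsetP => t; rewrite inE => /andP[]. Qed.

Theorem lemma2 (V : finType) (R : realFieldType)
  (Tr : {set {set V}}) (lg : {set V} -> {set V}) (len : {set V} -> R)
  (e : {set V}) :
  triangulation_with_lg Tr lg len ->
  terminal_edge Tr lg e ->
  forall t, t \in te_region Tr lg e ->
  (total_visits (te_region Tr lg e) (barrier_tips Tr lg (te_region Tr lg e)) t <= 3)%N.
Proof.
move=> [card_tri _ _ _] _ t tR.
rewrite -(card_tri t (subsetP (te_region_sub Tr lg e) t tR)).
exact: total_visits_le_card.
Qed.
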